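(* Let $g_n$ ($n\ge0$) denote the parity of the number of digits equal to $1$ in the negabinary representation of $n$, and for $k\ge0$ let $G_k$ be the finite word $g_0g_1\cdots g_{2^k-1}$ of the first $2^k$ terms. Then $G_0=0$, and: for every even $k\ge0$, $G_{k+1}=G_kF_k$ (concatenation), where $F_k$ is obtained from $G_k$ by replacing every letter $x$ by $1-x$; for every odd $k\ge1$, $G_{k+1}=G_kH_k$, where $H_k$ is obtained from $G_k$ by replacing each of its last $\frac{2}{3}(2^{k-1}-1)$ letters $x$ by $1-x$ and leaving the other letters unchanged.
   Context: Every nonnegative integer $n$ has a unique representation $n=\sum_{i\ge0} d_i(-2)^i$ with digits $d_i\in\{0,1\}$, only finitely many nonzero; this is the negabinary representation. Parity means the number modulo $2$, so $g_n\in\{0,1\}$. *)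

From mathcomp Require Import all_boot all_order all_algebra.
Set Implicit Arguments. Unset Strict Implicit. Unset Printing Implicit Defensive.
Import Order.TTheory GRing.Theory Num.Theory.

(* Negabinary (base -2) digits, least significant first.
   For z = d + (-2) * m with d = z mod 2 in {0,1}, the next value is
   m = (d - z) / 2 (exact division).  [fuel] bounds the recursion. *)
Fixpoint nb_digits_fuel (fuel : nat) (z : int) : seq bool :=
  match fuel with
  | 0 => [::]
  | f.+1 =>
      if z == 0 then [::]
      else let d := odd `|z|%N in
           d :: nb_digits_fuel f (((d%:Z - z) %/ 2)%Z)
  end.

Definition nbval (s : seq bool) : int :=
  \sum_(i < size s) (nth false s i)%:Z * (- 2%:Z) ^+ i.

(* Digits of the negabinary representation of n (the fuel 2n+2 is more
   than enough: |z| strictly decreases while |z| >= 2). *)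
Definition negabinary (n : nat) : seq bool := nb_digits_fuel (2 * n + 2) n%:Z.

Definition g (n : nat) : nat := odd (count id (negabinary n)).

Definition G (k : nat) : seq nat := [seq g i | i <- iota 0 (2 ^ k)].

Definition F (k : nat) : seq nat := [seq 1 - x | x <- G k].

Definition Hlen (k : nat) : nat := (2 * (2 ^ k.-1 - 1)) %/ 3.
Definition H (k : nat) : seq nat :=
  take (2 ^ k - Hlen k) (G k) ++ [seq 1 - x | x <- drop (2 ^ k - Hlen k) (G k)].

From mathcomp Require Import all_boot all_order all_algebra.
From mathcomp Require Import zify ring.
Import Order.TTheory GRing.Theory Num.Theory.

(* The negabinary digit parity [nbpar] of an integer satisfies
   nbpar (2q + d) = d (+) nbpar (-q).  The integers with at most k digits form
   an interval [nb_lo k, nb_hi k] of length 2^k, and on it the leading digits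
   contribute independently: nbpar (z + (-2)^k w) = nbpar z (+) nbpar w.
   Writing 2^k + i and i (for i < 2^k) as z + (-2)^k w with the same z in that
   interval and w among -2, -1, 0, 1, 2 then compares g_(2^k + i) with g_i;
   the endpoints of the interval, about 2^k/3 and -2^(k+1)/3, are where the
   2/3 in H_k comes from. *)

Local Open Scope ring_scope.

(* The digit step z |-> (d - z)/2 sends -1 to 1, so |z| alone does not decrease. *)
Definition nb_measure (z : int) : nat := (2 * `|z|%N + (z < 0)%R)%N.

Lemma nb_digits_fuel0 f : nb_digits_fuel f 0 = [::].
Proof. by case: f. Qed.

Lemma nb_measure_step (z : int) : z != 0 ->
  ((nb_measure (((odd `|z|%N)%:Z - z) %/ 2)%Z).+1 <= nb_measure z)%N.
Proof.
move=> nz; rewrite /nb_measure.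
have E := divz_eq z 2.
have -> : (odd `|z|%N)%:Z = (z %% 2)%Z by lia.
have -> : (z %% 2)%Z - z = - (z %/ 2)%Z * 2 by rewrite {2}E; ring.
rewrite mulzK //; lia.
Qed.

Lemma nb_digits_fuel_eq f f' z :
  (nb_measure z <= f)%N -> (nb_measure z <= f')%N ->
  nb_digits_fuel f z = nb_digits_fuel f' z.
Proof.
elim: f f' z => [|f IH] f' z.
  rewrite leqn0 => /eqP z0 _.
  have -> : z = 0 by move: z0; rewrite /nb_measure; lia.
  by rewrite !nb_digits_fuel0.
have [-> _ _|nz hf hf'] := eqVneq z 0; first by rewrite !nb_digits_fuel0.
have hs := @nb_measure_step _ nz.
case: f' hf' => [|f'] hf'; first by lia.
by rewrite /= (negbTE nz); congr (_ :: _); apply: IH; lia.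
Qed.

Definition nbpar (z : int) : bool :=
  odd (count id (nb_digits_fuel (nb_measure z) z)).

Lemma nbpar0 : nbpar 0 = false.
Proof. by rewrite /nbpar nb_digits_fuel0. Qed.

Lemma g_nbpar n : g n = nbpar n%:Z.
Proof.
rewrite /g /negabinary /nbpar (@nb_digits_fuel_eq _ (nb_measure n%:Z)) //.
by rewrite /nb_measure; lia.
Qed.

Lemma nbparE (q : int) (d : bool) : nbpar (q * 2 + d%:Z) = d (+) nbpar (- q).
Proof.
have [z0|nz] := eqVneq (q * 2 + d%:Z) 0.
  have [-> ->] : q = 0 /\ d = false by move: z0; case: d; lia.
  by rewrite mul0r add0r oppr0 nbpar0.
have hs := @nb_measure_step _ nz.
have hd : odd (absz (q * 2 + d%:Z)) = d by case: d hs {nz}; lia.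
have hq : ((d%:Z - (q * 2 + d%:Z)) %/ 2)%Z = - q.
  have -> : d%:Z - (q * 2 + d%:Z) = - q * 2 by ring.
  by rewrite mulzK.
move: hs; rewrite /nbpar hd hq.
case: (nb_measure (q * 2 + d%:Z)) => [|f] hs; first by lia.
rewrite /= (negbTE nz) hd hq (@nb_digits_fuel_eq f (nb_measure (- q))) //.
by case: d {hq hd nz hs}.
Qed.

Lemma nbpar1 : nbpar 1 = true.
Proof. by have := nbparE 0 true; rewrite mul0r add0r oppr0 nbpar0. Qed.

Lemma nbparN1 : nbpar (-1) = false.
Proof. by have := nbparE (-1) true; rewrite opprK nbpar1. Qed.

Lemma nbpar2 : nbpar 2 = false.
Proof. by have := nbparE 1 false; rewrite nbparN1. Qed.

Lemma nbparN2 : nbpar (-2) = true.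
Proof. by have := nbparE (-1) false; rewrite opprK nbpar1. Qed.

(* The values of k-digit strings; a (k+1)-digit value is d - 2v for a k-digit value v. *)
Fixpoint nb_range (k : nat) : int * int :=
  if k is k'.+1 then (- (2 * (nb_range k').2), 1 - 2 * (nb_range k').1)
  else (0, 0).

Definition nb_lo k := (nb_range k).1.
Definition nb_hi k := (nb_range k).2.

Lemma nb_loS k : nb_lo k.+1 = - (2 * nb_hi k). Proof. by []. Qed.
Lemma nb_hiS k : nb_hi k.+1 = 1 - 2 * nb_lo k. Proof. by []. Qed.

Lemma nb_rangeE k :
  3 * nb_hi k = (if odd k then 2 ^+ k.+1 else 2 ^+ k) - 1 /\
  3 * nb_lo k = 2 - (if odd k then 2 ^+ k else 2 ^+ k.+1).
Proof.
elim: k => [|k [IHhi IHlo]] //=; rewrite nb_loS nb_hiS.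
by case: (odd k) IHhi IHlo; rewrite /= !exprS => IHhi IHlo; split; lia.
Qed.

Lemma nbpar_add_pow k z w : nb_lo k <= z <= nb_hi k ->
  nbpar (z + (-2) ^+ k * w) = nbpar z (+) nbpar w.
Proof.
elim: k z w => [|k IH] z w.
  rewrite /nb_lo /nb_hi /= => hz.
  have -> : z = 0 by lia.
  by rewrite add0r mul1r nbpar0.
rewrite nb_loS nb_hiS => hz.
have E := divz_eq z 2.
have {E} : z = (z %/ 2)%Z * 2 + (odd `|z|%N)%:Z by lia.
move: (z %/ 2)%Z (odd _) => q d zE; rewrite {z}zE in hz *.
have -> : q * 2 + d%:Z + (-2) ^+ k.+1 * w = (q - (-2) ^+ k * w) * 2 + d%:Z.
  by rewrite exprS; ring.
rewrite !nbparE.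
have -> : - (q - (-2) ^+ k * w) = - q + (-2) ^+ k * w by ring.
by rewrite IH ?addbA //; case: d hz; lia.
Qed.

Lemma nbpar_swap_top k z a b m n : nb_lo k <= z <= nb_hi k ->
  m = z + (-2) ^+ k * a -> n = z + (-2) ^+ k * b ->
  nbpar n = nbpar m (+) nbpar a (+) nbpar b.
Proof.
move=> hz -> ->; rewrite !nbpar_add_pow //.
by case: (nbpar z) (nbpar a) (nbpar b) => [] [] [].
Qed.

Lemma pow2nZ k : (2 ^ k)%N%:Z = 2 ^+ k.
Proof. by rewrite -natz natrX. Qed.

Lemma nbpar_top_even k i : ~~ odd k -> (i < 2 ^ k)%N ->
  nbpar (2 ^ k + i)%N%:Z = ~~ nbpar i%:Z.
Proof.
move=> ek ik; have [hhi hlo] := nb_rangeE k; rewrite (negbTE ek) exprS in hhi hlo.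
have eP : (-2) ^+ k = 2 ^+ k :> int by rewrite exprNn -signr_odd (negbTE ek) mul1r.
have ik' : i%:Z < 2 ^+ k by rewrite -pow2nZ; lia.
rewrite PoszD pow2nZ; have [hi3|hi3] := lerP (3 * i%:Z) (2 ^+ k - 1).
- rewrite (@nbpar_swap_top k i%:Z 0 1 i%:Z) ?nbpar0 ?nbpar1;
    [by case: (nbpar _) | lia | ring | rewrite eP; ring].
- rewrite (@nbpar_swap_top k (i%:Z - 2 ^+ k) 1 2 i%:Z) ?nbpar1 ?nbpar2;
    [by case: (nbpar _) | lia | rewrite eP; ring | rewrite eP; ring].
Qed.

Lemma nbpar_top_odd k i : odd k -> (i < 2 ^ k)%N ->
  nbpar (2 ^ k + i)%N%:Z = if (i < 2 ^ k - Hlen k)%N then nbpar i%:Z else ~~ nbpar i%:Z.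
Proof.
move=> ok ik; have [hhi hlo] := nb_rangeE k; rewrite ok exprS in hhi hlo.
have eP : (-2) ^+ k = - 2 ^+ k :> int by rewrite exprNn -signr_odd ok mulN1r.
have ik' : i%:Z < 2 ^+ k by rewrite -pow2nZ; lia.
have ekN : (2 ^ k = 2 * 2 ^ k.-1)%N.
  by rewrite -expnS prednK //; case: k ok ik {hhi hlo eP ik'}.
have ekZ : 2 ^+ k = 2 * (2 ^ k.-1)%N%:Z :> int by rewrite -pow2nZ ekN PoszM.
rewrite PoszD pow2nZ /Hlen; have [hi3|hi3] := lerP (3 * i%:Z) (2 * 2 ^+ k - 1).
- rewrite ifT; last by lia.
  rewrite (@nbpar_swap_top k i%:Z 0 (-1) i%:Z) ?nbpar0 ?nbparN1;
    [by case: (nbpar _) | lia | ring | rewrite eP; ring].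
- rewrite ifF; last by lia.
  rewrite (@nbpar_swap_top k (i%:Z - 2 ^+ k) (-1) (-2) i%:Z) ?nbparN1 ?nbparN2;
    [by case: (nbpar _) | lia | rewrite eP; ring | rewrite eP; ring].
Qed.

Local Close Scope ring_scope.

Lemma G_succ k : G k.+1 = G k ++ [seq g (2 ^ k + i) | i <- iota 0 (2 ^ k)].
Proof.
by rewrite /G expnS mul2n -addnn iotaD map_cat add0n -{2}[2 ^ k]addn0 iotaDl -map_comp.
Qed.

Lemma F_map k : F k = [seq 1 - g i | i <- iota 0 (2 ^ k)].
Proof. by rewrite /F /G -map_comp. Qed.

Lemma H_map k :
  H k = [seq if i < 2 ^ k - Hlen k then g i else 1 - g i | i <- iota 0 (2 ^ k)].
Proof.
set t := 2 ^ k - Hlen k; have tk : t <= 2 ^ k by rewrite leq_subr.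
rewrite /H /G -map_take -map_drop take_iota drop_iota (minn_idPl tk) -map_comp.
have -> : iota 0 (2 ^ k) = iota 0 t ++ iota t (2 ^ k - t) by rewrite -iotaD subnKC.
rewrite add0n -/t map_cat; congr (_ ++ _); apply/eq_in_map => i.
  by rewrite mem_iota => /andP[_ ->].
by rewrite mem_iota leqNgt /= => /andP[/negbTE ->].
Qed.

Theorem theorem4 :
  G 0 = [:: 0] /\
  (forall k : nat, ~~ odd k -> G k.+1 = G k ++ F k) /\
  (forall k : nat, odd k -> G k.+1 = G k ++ H k).
Proof.
split=> //; split=> k hk; rewrite G_succ ?F_map ?H_map; congr (_ ++ _);
  apply/eq_in_map => i; rewrite mem_iota => /andP[_ ik] /=; rewrite !g_nbpar.
  by rewrite nbpar_top_even //; case: (nbpar _).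
by rewrite nbpar_top_odd //; case: ifP; case: (nbpar _).
Qed.
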